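(* Let $T\ge 1$ be an integer and let $v>0$, $c>0$, $k>0$, $\beta\in(0,1]$ with $kT<v$, and suppose $(1-\beta)c>\beta k$. Let $\varrho:=\lceil (1-\beta)c/(\beta k)\rceil$. Consider the stopping problem on times $\{0,1,\dots,T\}$ in which, from the perspective of time $t$, stopping at time $t+j$ ($0\le j\le T-t$) has value $\beta v-c$ if $j=0$ and $\beta(v-jk-c)$ if $j\ge1$. A (pure) strategy is a map $\sigma:\{0,\dots,T\}\to\{0,1\}$ with $\sigma(T)=1$ ($1$ = stop, $0$ = continue); for $t<T$ let $\tau_\sigma(t)=\min\{s>t:\sigma(s)=1\}$. Define: - the naive strategy $\sigma_0$: $\sigma_0(T)=1$ and for $t<T$, $\sigma_0(t)=1$ iff $\beta v-c\ge \max_{1\le j\le T-t}\beta(v-jk-c)$; - the update $\sigma\mapsto\sigma'$: $\sigma'(T)=1$ and for $t<T$, $\sigma'(t)=1$ iff $\beta v-c\ge \beta\big(v-(\tau_\sigma(t)-t)k-c\big)$; set $\sigma_{n+1}=\sigma_n'$ for $n\ge0$; - the sophisticated strategy $\sigma_S$: $\sigma_S(T)=1$ and, backward for $t=T-1,\dots,0$, $\sigma_S(t)=1$ iff $\beta v-c\ge\beta\big(v-(\tau_{\sigma_S}(t)-t)k-c\big)$. Then $\varrho\ge 2$, and $\sigma_n=\sigma_S$ for $n=2\big(\lceil (T+1)/\varrho\rceil-1\big)$; that is, the naive strategy is turned into the sophisticated one after $2(\lceil (T+1)/\varrho\rceil-1)$ rounds of training.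
   Context: This is the present-biased optimal stopping problem with immediate cost: stopping immediately costs $c$ now while the reward $v$ is received later (discounted by $\beta$); stopping $j\ge1$ periods later discounts both cost and reward by $\beta$ and reduces the reward by $jk$. The problem is state-independent, so strategies depend only on time. Ties are broken in favour of stopping. In each training round the agent at time $t$ chooses whether to stop now, taking as given that from time $t+1$ on she follows the previous round's strategy. *)

From HB Require Import structures.
From mathcomp Require Import all_boot all_order all_algebra.
From mathcomp Require Import reals.
Set Implicit Arguments. Unset Strict Implicit. Unset Printing Implicit Defensive.
Import Order.TTheory GRing.Theory Num.Theory.
Local Open Scope ring_scope.

(* A (pure) strategy: time -> stop (true) / continue (false); only times
   0..T matter, and all strategies below have sigma t = true for t >= T. *)
Definition strategy := nat -> bool.

Section Stopping.
Variables (R : realType) (T : nat) (v c k beta : R).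

Definition stop_value (j : nat) : R :=
  if j == 0%N then beta * v - c else beta * (v - j%:R * k - c).

(* tau_sigma(t) = min { s > t : sigma s }, searched in (t, T]
   (exists since sigma T = true for all strategies considered) *)
Definition tau (sigma : strategy) (t : nat) : nat :=
  (t.+1 + find sigma (iota t.+1 (T - t)))%N.

Definition naive : strategy := fun t =>
  if (T <= t)%N then true
  else all (fun j => stop_value j <= stop_value 0) (iota 1 (T - t)).

Definition update (sigma : strategy) : strategy := fun t =>
  if (T <= t)%N then true
  else stop_value (tau sigma t - t) <= stop_value 0.

Definition sigma_n (n : nat) : strategy := iter n update naive.

(* sophisticated strategy by backward induction:
   soph_list m = [:: sigma_S (T-m); ...; sigma_S T] *)
Fixpoint soph_list (m : nat) : seq bool :=
  match m with
  | 0 => [:: true]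
  | m'.+1 =>
      let s := soph_list m' in
      (stop_value (find id s).+1 <= stop_value 0) :: s
  end.

Definition sophisticated : strategy := fun t => nth true (soph_list T) t.

End Stopping.

(* Stopping now beats stopping j >= 1 periods later iff j >= rho, so a round
   of training makes the agent stop at t iff the current strategy does not
   stop during the next rho - 1 periods.  Measured by the distance d = T - t
   to the deadline, the naive strategy stops only at d = 0, and the rounds
   alternate between stopping exactly on {0, rho, ..., m rho} and stopping
   there or at any d >= (m + 1) rho.  The sophisticated strategy stops exactly
   at the multiples of rho, which the even rounds reach at m = T %/ rho, i.e.
   after 2 (ceil ((T + 1) / rho) - 1) rounds. *)

From HB Require Import structures.
From mathcomp Require Import all_boot all_order all_algebra.
From mathcomp Require Import reals zify lra.
Import Order.TTheory GRing.Theory Num.Theory.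

Set Implicit Arguments.
Unset Strict Implicit.
Unset Printing Implicit Defensive.

Definition on_grid (r m d : nat) : bool := (r %| d) && (d <= m * r).

Definition on_grid_or_beyond (r m d : nat) : bool :=
  on_grid r m d || (m.+1 * r <= d).

(* The subtraction [d - i] truncates: for [d < r] the window reaches the
   deadline, distance 0. *)
Definition clear_below (r : nat) (P : pred nat) (d : nat) : bool :=
  [forall i : 'I_r, (0 < i) ==> ~~ P (d - i)].

Definition update_dist (r : nat) (P : pred nat) (d : nat) : bool :=
  (d == 0) || clear_below r P d.

(* A strategy read off from the distances to the deadline at which it stops;
   at every [t >= T] it behaves as at distance 0. *)
Definition by_distance (T : nat) (P : pred nat) : strategy :=
  fun t => P (T - t).

Lemma clear_belowP r P d :
  reflect (forall i, 0 < i < r -> ~~ P (d - i)) (clear_below r P d).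
Proof.
apply: (iffP forallP) => [H i /andP[i0 ir] | H i].
  by have /implyP := H (Ordinal ir); apply.
by apply/implyP => i0; apply: H; rewrite i0 ltn_ord.
Qed.

Lemma on_grid0 r m : on_grid r m 0.
Proof. by rewrite /on_grid dvdn0. Qed.

Lemma on_grid_or_beyond0 r m : on_grid_or_beyond r m 0.
Proof. by rewrite /on_grid_or_beyond on_grid0. Qed.

Lemma on_grid_mul r m q : q <= m -> on_grid r m (q * r).
Proof. by move=> qm; rewrite /on_grid dvdn_mull // leq_mul2r qm orbT. Qed.

Lemma on_grid_or_beyond_mul r m q : on_grid_or_beyond r m (q * r).
Proof.
have [qm | mq] := leqP q m; first by rewrite /on_grid_or_beyond on_grid_mul.
by rewrite /on_grid_or_beyond leq_mul2r mq !orbT.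
Qed.

Lemma subn_modn d r : d - d %% r = d %/ r * r.
Proof. by rewrite {1}(divn_eq d r) addnK. Qed.

Lemma leq_modnS r m : 0 < r -> (r <= (m %% r).+1) = (r %| m.+1).
Proof.
move=> r0; rewrite /dvdn -[m.+1]addn1 -modnDml addn1.
have [x_lt | x_gt | ->] := ltngtP (m %% r).+1 r.
- by rewrite modn_small // leqNgt x_lt.
- by move: x_gt; rewrite ltnS leqNgt ltn_pmod.
- by rewrite modnn.
Qed.

Lemma dvdn_sub_small r d i :
  0 < d -> 0 < i < r -> r %| d -> ~~ (r %| d - i).
Proof.
move=> d0 /andP[i0 ir] rd; have rled := dvdn_leq d0 rd.
rewrite dvdn_subr ?(leq_trans (ltnW ir)) //.
by apply/negP => /(dvdn_leq i0); rewrite leqNgt ir.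
Qed.

Lemma clear_below_on_grid r m d : 0 < r -> 0 < d ->
  clear_below r (on_grid r m) d = on_grid_or_beyond r m d.
Proof.
move=> r0 d0; apply/clear_belowP/idP => [clear | grid i ir].
  apply/negPn/negP; rewrite /on_grid_or_beyond negb_or -ltnNge.
  case/andP=> off_grid d_lt.
  have qm : d %/ r <= m by rewrite -ltnS ltn_divLR.
  have [rd | ndr] := boolP (r %| d).
    by move: off_grid; rewrite -(divnK rd) on_grid_mul.
  have i_r : 0 < d %% r < r by rewrite ltn_pmod // lt0n -/(dvdn r d) ndr.
  by move: (clear _ i_r); rewrite subn_modn on_grid_mul.
apply/negP; case/orP: grid => [/andP[rd _] | far] /andP[rdi dim].
  by move: rdi; apply/negP; apply: dvdn_sub_small.
move: ir dim far; rewrite mulSn; lia.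
Qed.

Lemma clear_below_on_grid_or_beyond r m d : 1 < r -> 0 < d ->
  clear_below r (on_grid_or_beyond r m) d = on_grid r m.+1 d.
Proof.
move=> r1 d0; have r0 : 0 < r by lia.
apply/clear_belowP/idP => [clear | /andP[rd dm] i ir].
  apply/negPn/negP; rewrite /on_grid negb_and -ltnNge.
  have [rd /= d_gt | ndr _] := boolP (r %| d).
    have : 0 < 1 < r by rewrite r1.
    by move/clear/negP; apply; apply/orP; right; lia.
  have i_r : 0 < d %% r < r by rewrite ltn_pmod // lt0n -/(dvdn r d) ndr.
  by move: (clear _ i_r); rewrite subn_modn on_grid_or_beyond_mul.
have rle := dvdn_leq d0 rd.
rewrite /on_grid_or_beyond /on_grid (negbTE (dvdn_sub_small d0 ir rd)) /=.
move: ir; lia.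
Qed.

Lemma update_dist_on_grid r m : 0 < r ->
  update_dist r (on_grid r m) =1 on_grid_or_beyond r m.
Proof.
by move=> r0 [|d]; [rewrite on_grid_or_beyond0 | exact: clear_below_on_grid].
Qed.

Lemma update_dist_on_grid_or_beyond r m : 1 < r ->
  update_dist r (on_grid_or_beyond r m) =1 on_grid r m.+1.
Proof.
by move=> r1 [|d]; [rewrite on_grid0 | exact: clear_below_on_grid_or_beyond].
Qed.

Lemma on_grid_div r M d : 0 < r -> d <= M -> on_grid r (M %/ r) d = (r %| d).
Proof.
move=> r0 dM; apply/andP/idP => [[] // | rd]; split=> //.
by rewrite -(divnK rd) leq_mul2r leq_div2r ?orbT.
Qed.

Section Training.
Variables (R : realType) (T : nat) (v c k beta : R).

Lemma tau_spec (s : strategy) t : s T -> t < T ->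
  [/\ t < tau T s t, s (tau T s t) & forall u, t < u < tau T s t -> ~~ s u].
Proof.
move=> sT tT; set l := iota t.+1 (T - t).
have has_l : has s l by apply/hasP; exists T => //; rewrite mem_iota; lia.
have lt_size : find s l < size l by rewrite -has_find.
have nth_l i : i < size l -> nth 0 l i = t.+1 + i.
  by rewrite size_iota; apply: nth_iota.
split; first by rewrite /tau; lia.
  by rewrite /tau -nth_l // nth_find.
move=> u /andP[tu ut].
have lt_find : u - t.+1 < find s l by move: ut; rewrite /tau -/l; lia.
have -> : u = t.+1 + (u - t.+1) by lia.
by rewrite -nth_l ?(before_find 0 lt_find) ?(ltn_trans lt_find lt_size).
Qed.

Variable r : nat.
Hypothesis stop_now_iff : forall j, 0 < j ->
  (stop_value v c k beta j <= stop_value v c k beta 0)%R = (r <= j).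
Hypothesis r_gt1 : 1 < r.
Let r_gt0 : 0 < r := ltnW r_gt1.

Lemma updateP (s : strategy) t : s T -> t < T ->
  reflect (forall i, 0 < i < r -> ~~ s (t + i)) (update T v c k beta s t).
Proof.
move=> sT tT; have [t_tau s_tau before_tau] := tau_spec sT tT.
rewrite /update leqNgt tT /= stop_now_iff ?subn_gt0 //.
apply: (iffP idP) => [r_le i /andP[i0 ir] | clear].
  by apply: before_tau; lia.
rewrite leqNgt; apply/negP => tau_lt.
suff: ~~ s (tau T s t) by rewrite s_tau.
by rewrite -(subnKC (ltnW t_tau)); apply: clear; lia.
Qed.

Lemma update_by_distance (s : strategy) (P : pred nat) :
  P 0 -> s =1 by_distance T P ->
  update T v c k beta s =1 by_distance T (update_dist r P).
Proof.
move=> P0 eq_s t; rewrite /by_distance /update_dist.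
have [Tt | tT] := leqP T t.
  by rewrite /update Tt (eqP (_ : T - t == 0)) ?subn_eq0.
have sT : s T by rewrite eq_s /by_distance subnn.
rewrite subn_eq0 leqNgt tT /=.
apply/(updateP sT tT)/clear_belowP => clear i /clear;
  by rewrite eq_s /by_distance subnDA.
Qed.

Lemma naive_by_distance : naive T v c k beta =1 by_distance T (on_grid r 0).
Proof.
move=> t; rewrite /naive /by_distance /on_grid mul0n leqn0.
have [Tt | tT] := leqP T t.
  by rewrite (eqP (_ : T - t == 0)) ?dvdn0 // subn_eq0.
have [d ->] : exists d, T - t = d.+1 by exists (T - t).-1; lia.
by rewrite /= andbF stop_now_iff // leqNgt r_gt1.
Qed.

Lemma sigma_n_by_distance m :
  sigma_n T v c k beta m.*2 =1 by_distance T (on_grid r m) /\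
  sigma_n T v c k beta m.*2.+1 =1 by_distance T (on_grid_or_beyond r m).
Proof.
have odd_step n : sigma_n T v c k beta n.*2 =1 by_distance T (on_grid r n) ->
    sigma_n T v c k beta n.*2.+1 =1 by_distance T (on_grid_or_beyond r n).
  move=> even t.
  rewrite /sigma_n iterS (update_by_distance (on_grid0 r n) even).
  by rewrite /by_distance update_dist_on_grid.
elim: m => [|m [_ odd_m]].
  by split; [|apply: odd_step]; apply: naive_by_distance.
suff even_m1 : sigma_n T v c k beta m.+1.*2 =1 by_distance T (on_grid r m.+1).
  by split; [|apply: odd_step].
move=> t; rewrite doubleS /sigma_n iterS.
rewrite (update_by_distance (on_grid_or_beyond0 r m) odd_m).
by rewrite /by_distance update_dist_on_grid_or_beyond.
Qed.

Lemma soph_list_spec m :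
  find id (soph_list v c k beta m) = m %% r /\
  forall i, nth true (soph_list v c k beta m) i = (r %| m - i).
Proof.
elim: m => [|m [find_m nth_m]].
  by split=> [|[|i]] /=; rewrite ?mod0n ?sub0n ?dvdn0 ?nth_nil.
rewrite /= find_m stop_now_iff // leq_modnS //; split=> [|[|i] /=] //.
by rewrite modnS; case: (r %| m.+1).
Qed.

Lemma sophisticated_by_distance :
  sophisticated T v c k beta =1 by_distance T (dvdn r).
Proof. by move=> t; rewrite /sophisticated (proj2 (soph_list_spec T)). Qed.

Lemma sigma_n_sophisticated :
  sigma_n T v c k beta (T %/ r).*2 =1 sophisticated T v c k beta.
Proof.
move=> t; rewrite (proj1 (sigma_n_by_distance _)) sophisticated_by_distance.
by rewrite /by_distance on_grid_div ?leq_subr.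
Qed.
End Training.

Local Open Scope ring_scope.

Lemma stop_value_le_now (R : realType) (v c k beta : R) j :
  0 < beta * k -> (0 < j)%N ->
  (stop_value v c k beta j <= stop_value v c k beta 0)
  = (Num.ceil ((1 - beta) * c / (beta * k)) <= j%:Z).
Proof.
move=> bk0 j0; rewrite /stop_value eqxx (negbTE (lt0n_neq0 j0)).
rewrite ceil_le_int ler_pdivrMr //.
by rewrite -pmulrn; apply/idP/idP => h; lra.
Qed.

Lemma ceil_succ_div (R : realType) (n r : nat) : (0 < r)%N ->
  Num.ceil (n.+1%:R / r%:R : R) = (n %/ r).+1%:Z.
Proof.
move=> r0; apply: ceil_def; have -> : (n %/ r).+1%:Z - 1 = (n %/ r)%:Z by lia.
rewrite -!pmulrn ltr_pdivlMr ?ler_pdivrMr ?ltr0n // -!natrM ltr_nat ler_nat.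
by move: (divn_eq n r) (ltn_pmod n r0); rewrite mulSn; lia.
Qed.

Theorem proposition5p1 (R : realType) (T : nat) (v c k beta : R) :
  (1 <= T)%N -> 0 < v -> 0 < c -> 0 < k -> 0 < beta -> beta <= 1 ->
  k * T%:R < v -> beta * k < (1 - beta) * c ->
  let rho : int := Num.ceil ((1 - beta) * c / (beta * k)) in
  (2 <= rho) /\
  let n : nat := `|(2 * (Num.ceil ((T.+1)%:R / rho%:~R : R) - 1))%R|%N in
  forall t : nat, (t <= T)%N ->
    sigma_n T v c k beta n t = sophisticated T v c k beta t.
Proof.
move=> _ _ _ k0 beta0 _ _ bk_lt rho.
have bk0 : 0 < beta * k by rewrite mulr_gt0.
have rho_gt1 : 1 < rho by rewrite ceil_gt_int ltr_pdivlMr // mul1r.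
split=> //.
have [r r_gt1 rE] : exists2 r : nat, (1 < r)%N & rho = r%:Z.
  by exists `|rho|%N; lia.
have stop_now_iff j : (0 < j)%N ->
    (stop_value v c k beta j <= stop_value v c k beta 0) = (r <= j)%N.
  by move=> j0; rewrite stop_value_le_now // -/rho rE lez_nat.
move=> n t _; have -> : n = (T %/ r).*2.
  rewrite /n rE -pmulrn ceil_succ_div ?(ltnW r_gt1) // -mul2n.
  by move: (T %/ r)%N => q; lia.
exact: sigma_n_sophisticated stop_now_iff r_gt1 t.
Qed.
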